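(* Let $S$ be a numerical semigroup with minimal generators $e<a_1<\dots<a_t$, blowup $B$ and generating tuple $\mathcal D=(e,d_1,\dots,d_t)$, $d_i=a_i-e$. Fix $0\le i<e$ and write ${\rm adj}(S_i)=\{u_0<u_1<u_2<\cdots\}$. Then for every $u\in{\rm adj}(S_i)$ there exists $s\in S_i$ with ${\rm d}_{\max}(s;S)=|\mathcal R(u)|$.
   Context: A numerical semigroup is a submonoid of $(\mathbb N,+)$ with finite complement in $\mathbb N$. Its minimal generators are $e<a_1<\dots<a_t$, and $e$ is called the multiplicity. An $S$-factorization of $n\in S$ is a tuple $(c_0,\dots,c_t)\in\mathbb N^{t+1}$ with $c_0e+\sum_{i\ge1}c_ia_i=n$; its length is $\sum c_i$. ${\rm ord}(n;S)$ is the maximum length of an $S$-factorization of $n$, and ${\rm d}_{\max}(n;S)$ is the number of $S$-factorizations of $n$ of length ${\rm ord}(n;S)$. The blowup of $S$ is $B=\langle e,d_1,\dots,d_t\rangle$ with $d_i=a_i-e$. A $B^{\mathcal D}$-factorization of $b\in B$ is a tuple $(x_0,\dots,x_t)\in\mathbb N^{t+1}$ with $x_0e+\sum_{i\ge1}x_id_i=b$, and its length is $\sum x_i$. The minimum such length is denoted $\min{\rm ord}(b;B^{\mathcal D})$, and $\mathcal P(b)$ denotes the set of all $B^{\mathcal D}$-factorizations of $b$. The adjustment of $s\in S$ is ${\rm adj}(s)=s-{\rm ord}(s;S)e$, and ${\rm adj}(U)=\{{\rm adj}(s):s\in U\}$. We write $S_i=\{s\in S: s\equiv i \pmod e\}$.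 The sets $\mathcal R(u_j)$ are defined recursively by $\mathcal R(u_0)=\mathcal P(u_0)$ and, for $j>0$, $\mathcal R(u_j)=\{\mathbf x\in\mathcal P(u_j): |\mathbf x|<\min{\rm ord}(u_{j-1};B^{\mathcal D})-\frac{u_j-u_{j-1}}{e}\}$. *)

From mathcomp Require Import all_boot.
Set Implicit Arguments. Unset Strict Implicit. Unset Printing Implicit Defensive.

(* Generators are given as a function  h : 'I_k -> nat  (k = t+1 entries,
   index 0 being the multiplicity e).  All generators used below are positive,
   so every coordinate of a factorization of n is <= n; hence factorizations
   of n are encoded as finite functions  'I_k -> 'I_n.+1. *)

Definition flen (k n : nat) (x : {ffun 'I_k -> 'I_n.+1}) : nat :=
  \sum_(j < k) (x j : nat).

Definition facts (k : nat) (h : 'I_k -> nat) (n : nat) :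
    {set {ffun 'I_k -> 'I_n.+1}} :=
  [set x : {ffun 'I_k -> 'I_n.+1} | \sum_(j < k) (x j : nat) * h j == n].

Definition inMon (k : nat) (h : 'I_k -> nat) (n : nat) : Prop :=
  exists c : 'I_k -> nat, \sum_(j < k) c j * h j = n.

Definition min_gens_numsgp (t : nat) (g : 'I_t.+1 -> nat) : Prop :=
  [/\ 0 < g ord0,
      (forall j1 j2 : 'I_t.+1, j1 < j2 -> g j1 < g j2),
      (forall j : 'I_t.+1,
          ~ exists c : 'I_t.+1 -> nat, c j = 0 /\ \sum_(l < t.+1) c l * g l = g j)
    & (exists N, forall n, N <= n -> inMon g n)].

Definition ordS (t : nat) (g : 'I_t.+1 -> nat) (n : nat) : nat :=
  \max_(x in facts g n) flen x.

Definition dmax (t : nat) (g : 'I_t.+1 -> nat) (n : nat) : nat :=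
  #|[set x in facts g n | flen x == ordS g n]|.

Definition blowD (t : nat) (g : 'I_t.+1 -> nat) : 'I_t.+1 -> nat :=
  fun j => if j == ord0 then g ord0 else g j - g ord0.

Definition Pset (t : nat) (g : 'I_t.+1 -> nat) (b : nat) :=
  facts (blowD g) b.

(* min ord(b; B^D).  Every D-factorization of b has length <= b (all entries of
   D are >= 1), so b is a neutral default; for b in B this is the true minimum. *)
Definition minordB (t : nat) (g : 'I_t.+1 -> nat) (b : nat) : nat :=
  \big[minn/b]_(x in Pset g b) flen x.

Definition adj (t : nat) (g : 'I_t.+1 -> nat) (s : nat) : nat :=
  s - ordS g s * g ord0.

Definition inSi (t : nat) (g : 'I_t.+1 -> nat) (i s : nat) : Prop :=
  inMon g s /\ s %% g ord0 = i.

Definition inAdjSi (t : nat) (g : 'I_t.+1 -> nat) (i u : nat) : Prop :=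
  exists s, inSi g i s /\ adj g s = u.

(* Writing adj(S_i) = {u_0 < u_1 < ...}:
   adjPred g i u None      <-> u = u_0 (u is the least element of adj(S_i));
   adjPred g i u (Some v)  <-> u = u_j and v = u_{j-1} for some j > 0. *)
Definition adjPred (t : nat) (g : 'I_t.+1 -> nat) (i u : nat) (pv : option nat)
    : Prop :=
  match pv with
  | None => forall w, inAdjSi g i w -> u <= w
  | Some v => [/\ inAdjSi g i v, v < u &
                 forall w, inAdjSi g i w -> v < w -> u <= w]
  end.

(* R(u_j): R(u_0) = P(u_0), and for j > 0
   R(u_j) = { x in P(u_j) : |x| < min ord(u_{j-1}; B^D) - (u_j - u_{j-1})/e }.
   (Since u_j = u_{j-1} mod e the division is exact; when the right-hand side
   is negative both the integer and the truncated-nat comparisons are false.) *)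
Definition Rset (t : nat) (g : 'I_t.+1 -> nat) (u : nat) (pv : option nat) :=
  match pv with
  | None => Pset g u
  | Some v => [set x in Pset g u |
                 flen x < minordB g v - (u - v) %/ g ord0]
  end.

(* For s in S, a factorization c of maximal length ord(s) becomes, after
   writing a_j = d_j + e and dropping c_0, a B^D-factorization of
   adj(s) = s - ord(s) e with first coordinate 0.  Conversely a
   B^D-factorization x of u with x_0 = 0 and |x| <= m lifts to an
   S-factorization of u + m e of length m.  So whenever ord(u + m e) = m,
   d_max(u + m e) counts the x in P(u) with |x| <= m, and ord(u + m e) = m
   follows as soon as adj(u + m e) >= u.  For u = u_0 take m = u.  For
   u = u_j with j > 0 take m = min ord(u_{j-1}; B^D) - (u_j - u_{j-1})/e - 1:
   then u + m e = u_{j-1} + (min ord(u_{j-1}; B^D) - 1) e, whose adjustment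
   is strictly above u_{j-1}, hence at least u_j; and |x| <= m is exactly
   the bound defining R(u_j). *)

From Pilot Require Import Defs.
From mathcomp Require Import all_boot all_order zify.
(* Re-import so that [ordS] denotes [Defs.ordS], not [fintype.ordS]. *)
Import Defs.
Set Implicit Arguments. Unset Strict Implicit. Unset Printing Implicit Defensive.

Section Factorizations.
Variable k : nat.
Implicit Types (h c : 'I_k -> nat) (n : nat).

Definition len c := \sum_(j < k) c j.
Definition weight h c := \sum_(j < k) c j * h j.

Definition ffun_of_nat n c : {ffun 'I_k -> 'I_n.+1} := [ffun j => inord (c j)].
Definition nat_of_ffun n (x : {ffun 'I_k -> 'I_n.+1}) : 'I_k -> nat :=
  fun j => x j.

Lemma ffun_of_natE n c j : c j <= n -> ffun_of_nat n c j = c j :> nat.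
Proof. by move=> le_cn; rewrite ffunE inordK. Qed.

Lemma ffun_nat_inj n (x y : {ffun 'I_k -> 'I_n.+1}) :
  nat_of_ffun x =1 nat_of_ffun y -> x = y.
Proof. by move=> xy; apply/ffunP => j; apply/val_inj/xy. Qed.

Lemma eq_len c c' : c =1 c' -> len c = len c'.
Proof. by move=> cc'; apply: eq_bigr => j _; rewrite cc'. Qed.

Lemma flenE n (x : {ffun 'I_k -> 'I_n.+1}) : flen x = len (nat_of_ffun x).
Proof. by []. Qed.

Lemma weight_facts h n x : x \in facts h n -> weight h (nat_of_ffun x) = n.
Proof. by rewrite inE => /eqP. Qed.

Variable h : 'I_k -> nat.
Hypothesis h_gt0 : forall j, 0 < h j.

Lemma leq_coord_weight c j : c j <= weight h c.
Proof.
by rewrite /weight (bigD1 j) //= (leq_trans _ (leq_addr _ _)) ?leq_pmulr.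
Qed.

Lemma leq_len_weight c : len c <= weight h c.
Proof. by apply: leq_sum => j _; rewrite leq_pmulr. Qed.

Lemma ffun_of_natK n c : weight h c = n -> nat_of_ffun (ffun_of_nat n c) =1 c.
Proof. by move=> <- j; rewrite /nat_of_ffun ffun_of_natE ?leq_coord_weight. Qed.

Lemma facts_ffun_of_nat n c : weight h c = n -> ffun_of_nat n c \in facts h n.
Proof.
move=> wc; rewrite inE -[X in _ == X]wc; apply/eqP/eq_bigr => j _.
by rewrite -(ffun_of_natK wc j).
Qed.

Lemma flen_ffun_of_nat n c : weight h c = n -> flen (ffun_of_nat n c) = len c.
Proof. by move=> wc; apply: eq_bigr => j _; rewrite -(ffun_of_natK wc j). Qed.

End Factorizations.

Section UpdateHead.
Variable k : nat.
Implicit Types (h c : 'I_k.+1 -> nat).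

Definition upd0 c a : 'I_k.+1 -> nat := fun j => if j == ord0 then a else c j.

Lemma upd0_ord0 c a : upd0 c a ord0 = a.
Proof. by rewrite /upd0 eqxx. Qed.

Lemma upd0E c a j : j != ord0 -> upd0 c a j = c j.
Proof. by rewrite /upd0 => /negbTE ->. Qed.

Lemma weight_upd0 h c a :
  weight h (upd0 c a) + c ord0 * h ord0 = weight h c + a * h ord0.
Proof.
rewrite /weight !big_ord_recl upd0_ord0.
under eq_bigr do rewrite upd0E //.
lia.
Qed.

Lemma len_upd0 c a : len (upd0 c a) + c ord0 = len c + a.
Proof.
rewrite /len !big_ord_recl upd0_ord0.
under eq_bigr do rewrite upd0E //.
lia.
Qed.

End UpdateHead.

Section Blowup.
Variables (t : nat) (g : 'I_t.+1 -> nat).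
Local Notation e := (g ord0).
Local Notation D := (blowD g).
Hypothesis e_gt0 : 0 < e.
Hypothesis e_lt_gen : forall j, j != ord0 -> e < g j.

Lemma gen_gt0 j : 0 < g j.
Proof. by case: (eqVneq j ord0) => [->|/e_lt_gen]; last exact: leq_trans. Qed.

Lemma blowD_gt0 j : 0 < D j.
Proof. by rewrite /blowD; case: eqVneq => [//|/e_lt_gen]; rewrite subn_gt0. Qed.

Lemma weight_blowD c : weight g c = weight D (upd0 c 0) + len c * e.
Proof.
rewrite /weight /len big_distrl -big_split /=; apply: eq_bigr => j _.
rewrite /upd0 /blowD; case: eqVneq => [->|/e_lt_gen/ltnW le_eg]; first by [].
by rewrite -mulnDr subnK.
Qed.

Lemma weight_blowD_head c : weight g c + c ord0 * e = weight D c + len c * e.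
Proof.
have := weight_upd0 D c 0; rewrite /blowD eqxx mul0n addn0 -/D => <-.
by rewrite weight_blowD addnAC.
Qed.

(* Replacing x_0 by a turns a B^D-factorization x of b into an
   S-factorization of b + (a + |x| - 2 x_0) e. *)
Definition factS_of_factD m (x : 'I_t.+1 -> nat) :=
  upd0 x (m + 2 * x ord0 - len x).

Lemma factS_of_factD_spec x b m :
  weight D x = b -> len x <= m + 2 * x ord0 ->
  weight g (factS_of_factD m x) = b + m * e /\
  len (factS_of_factD m x) = m + x ord0.
Proof.
rewrite /factS_of_factD; set a := _ - len x => wx lx.
have := weight_blowD_head (upd0 x a); rewrite upd0_ord0.
have := weight_upd0 D x a; rewrite /blowD eqxx -/D wx.
have := len_upd0 x a.
have -> : len (upd0 x a) = m + x ord0 by have := len_upd0 x a; lia.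
nia.
Qed.

Lemma eq_factS_of_factD m x y :
  x =1 y -> factS_of_factD m x =1 factS_of_factD m y.
Proof. by move=> xy j; rewrite /factS_of_factD /upd0 (eq_len xy) !xy. Qed.

Lemma factS_of_factD_upd0 m c : len c = m -> factS_of_factD m (upd0 c 0) =1 c.
Proof.
move=> lc j; rewrite /factS_of_factD upd0_ord0 muln0 addn0.
case: (eqVneq j ord0) => [->|nj]; last by rewrite !upd0E.
by rewrite upd0_ord0; have := len_upd0 c 0; lia.
Qed.

Lemma inMon_factD x b m :
  weight D x = b -> len x <= m + 2 * x ord0 -> inMon g (b + m * e).
Proof.
by move=> wx lx; exists (factS_of_factD m x); case: (factS_of_factD_spec wx lx).
Qed.

Lemma ordS_ge c n : weight g c = n -> len c <= ordS g n.
Proof.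
move=> wc; rewrite -(flen_ffun_of_nat gen_gt0 wc).
apply: leq_bigmax_cond; exact (facts_ffun_of_nat gen_gt0 wc).
Qed.

Lemma ordS_max n : inMon g n -> exists2 c, weight g c = n & len c = ordS g n.
Proof.
case=> c0 wc0; have : 0 < #|facts g n|.
  apply/card_gt0P; exists (ffun_of_nat n c0).
  exact (facts_ffun_of_nat gen_gt0 wc0).
case/(eq_bigmax_cond (fun x => flen x)) => x xf xmax.
by exists (nat_of_ffun x); [exact: weight_facts | rewrite /ordS xmax].
Qed.

Lemma minordB_le y v : weight D y = v -> minordB g v <= len y.
Proof.
move=> wy; rewrite -(flen_ffun_of_nat blowD_gt0 wy).
exact (Order.TotalTheory.bigmin_le_cond v (fun x => flen x)
         (facts_ffun_of_nat blowD_gt0 wy)).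
Qed.

Lemma minordB_min y v :
  weight D y = v -> exists2 z, weight D z = v & len z = minordB g v.
Proof.
move=> wy; have len_le_v x : x \in Pset g v -> flen x <= v.
  move=> xP; rewrite flenE -[leqRHS](weight_facts xP).
  exact: (leq_len_weight blowD_gt0).
have [x xP xmin] := Order.TotalTheory.eq_bigmin (x := v) _ _ (fun x => flen x)
  (facts_ffun_of_nat blowD_gt0 wy) len_le_v.
by exists (nat_of_ffun x); [exact: weight_facts | exact (esym xmin)].
Qed.

Lemma adj_add_ordS s : inMon g s -> adj g s + ordS g s * e = s.
Proof.
case/ordS_max=> c wc lc; have := weight_blowD c.
rewrite wc lc /adj; lia.
Qed.

Lemma adj_modn s : inMon g s -> adj g s = s %[mod e].
Proof. by move/adj_add_ordS=> {2}<-; rewrite addnC modnMDl. Qed.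

Lemma adj_factD s :
  inMon g s ->
  exists x, [/\ weight D x = adj g s, x ord0 = 0 & len x <= ordS g s].
Proof.
move=> sS; have [c wc lc] := ordS_max sS.
exists (upd0 c 0); split; first 2 [exact: upd0_ord0].
- by have := weight_blowD c; have := adj_add_ordS sS; rewrite wc lc; lia.
- by have := len_upd0 c 0; rewrite lc; lia.
Qed.

Lemma minordB_adj_le s : inMon g s -> minordB g (adj g s) <= ordS g s.
Proof. by case/adj_factD=> x [wx _ lx]; apply: leq_trans (minordB_le wx) lx. Qed.

Lemma ordS_ge_factD x b m :
  weight D x = b -> len x <= m + 2 * x ord0 -> m + x ord0 <= ordS g (b + m * e).
Proof.
by move=> wx lx; case: (factS_of_factD_spec wx lx) => wc <-; exact: ordS_ge.
Qed.

Lemma ordS_addn s n : inMon g s -> ordS g s + n <= ordS g (s + n * e).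
Proof.
case/ordS_max=> c wc <-.
have <- : len (upd0 c (c ord0 + n)) = len c + n.
  by have := len_upd0 c (c ord0 + n); lia.
by apply: ordS_ge; have := weight_upd0 g c (c ord0 + n); rewrite wc mulnDl; lia.
Qed.

Lemma adj_addn_le s n : inMon g s -> adj g (s + n * e) <= adj g s.
Proof.
move=> sS; have := leq_mul (ordS_addn n sS) (leqnn e).
by rewrite /adj mulnDl; lia.
Qed.

Lemma ordS_addn_minordB y v n :
  weight D y = v -> minordB g v <= n -> n <= ordS g (v + n * e).
Proof.
move=> wy le_mn; have [z wz lz] := minordB_min wy.
have lz' : len z <= n + 2 * z ord0 by lia.
exact: leq_trans (leq_addr _ _) (ordS_ge_factD wz lz').
Qed.

Lemma factD_head0 x b m :
  ordS g (b + m * e) = m -> weight D x = b -> len x <= m -> x ord0 = 0.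
Proof.
by move=> om wx lx; have := ordS_ge_factD wx (leq_trans lx (leq_addr _ _)); lia.
Qed.

Lemma ordS_addn_eq x u m :
  weight D x = u -> len x <= m -> u <= adj g (u + m * e) ->
  ordS g (u + m * e) = m.
Proof.
move=> wx lx le_u; have lx' : len x <= m + 2 * x ord0 by lia.
have le_m := ordS_ge_factD wx lx'; have := adj_add_ordS (inMon_factD wx lx').
move=> sum_eq; have : ordS g (u + m * e) * e <= m * e by lia.
by rewrite leq_pmul2r //; lia.
Qed.

Lemma dmax_addn u m :
  ordS g (u + m * e) = m ->
  dmax g (u + m * e) = #|[set x in Pset g u | flen x <= m]|.
Proof.
move=> om; set R := [set x in Pset g u | flen x <= m].
have R_lift x : x \in R ->
    [/\ weight g (factS_of_factD m (nat_of_ffun x)) = u + m * e,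
        len (factS_of_factD m (nat_of_ffun x)) = m & nat_of_ffun x ord0 = 0].
  rewrite inE => /andP [/weight_facts wx lx]; have x0 := factD_head0 om wx lx.
  have := @factS_of_factD_spec _ _ m wx.
  by rewrite x0 muln0 !addn0 => /(_ lx) [-> ->].
pose f (x : {ffun 'I_t.+1 -> 'I_u.+1}) :=
  ffun_of_nat (u + m * e) (factS_of_factD m (nat_of_ffun x)).
have fE x : x \in R -> nat_of_ffun (f x) =1 factS_of_factD m (nat_of_ffun x).
  by case/R_lift=> wx _ _; exact (ffun_of_natK gen_gt0 wx).
have f_inj : {in R &, injective f}.
  move=> x y xR yR fxy; apply: ffun_nat_inj => j.
  have [_ _ x0] := R_lift x xR; have [_ _ y0] := R_lift y yR.
  case: (eqVneq j ord0) => [->|nj]; first by rewrite x0 y0.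
  by have := fE x xR j; rewrite fxy fE // /factS_of_factD !upd0E.
rewrite /dmax om -(card_in_imset f_inj); apply: eq_card => c.
rewrite inE; apply/andP/imsetP => [[cS /eqP lc] | [x xR ->]].
- have wc := weight_facts cS; rewrite flenE in lc.
  have wx : weight D (upd0 (nat_of_ffun c) 0) = u.
    by have := weight_blowD (nat_of_ffun c); rewrite wc lc; lia.
  pose x := ffun_of_nat u (upd0 (nat_of_ffun c) 0).
  have xR : x \in R.
    rewrite inE (facts_ffun_of_nat blowD_gt0 wx) (flen_ffun_of_nat blowD_gt0 wx).
    by have := len_upd0 (nat_of_ffun c) 0; rewrite lc; lia.
  exists x => //; apply: ffun_nat_inj => j.
  rewrite fE // (eq_factS_of_factD m (ffun_of_natK blowD_gt0 wx)).
  by rewrite factS_of_factD_upd0.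
- have [wx lx _] := R_lift x xR.
  by rewrite (facts_ffun_of_nat gen_gt0 wx) (flen_ffun_of_nat gen_gt0 wx) lx.
Qed.

Lemma ordS_lt_minordB s v q y :
  inMon g s -> adj g s = v + q * e -> 0 < q -> weight D y = v ->
  ordS g s + q < minordB g v.
Proof.
move=> sS adj_s q_gt0 wy; rewrite ltnNge; apply/negP => le_mu.
have := ordS_addn_minordB wy le_mu.
have -> : v + (ordS g s + q) * e = s.
  by rewrite -[RHS]adj_add_ordS // adj_s mulnDl; lia.
lia.
Qed.

Lemma adj_addn_pred_minordB sv v :
  inMon g sv -> adj g sv = v -> 0 < minordB g v ->
  inMon g (v + (minordB g v).-1 * e) -> v < adj g (v + (minordB g v).-1 * e).
Proof.
move=> svS adj_sv mu_gt0 sS; rewrite ltn_neqAle; apply/andP; split.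
  apply/eqP => adj_s; have := minordB_adj_le sS; rewrite -adj_s.
  have := adj_add_ordS sS; rewrite -adj_s => /eqP; rewrite eqn_add2l.
  by rewrite eqn_pmul2r // => /eqP ->; lia.
have le_mu := minordB_adj_le svS; rewrite adj_sv in le_mu.
have sv_eq : sv = v + (minordB g v).-1 * e + (ordS g sv - (minordB g v).-1) * e.
  rewrite -addnA -mulnDl subnKC ?(leq_trans (leq_pred _) le_mu) //.
  by rewrite -adj_sv adj_add_ordS.
by rewrite -{1}adj_sv sv_eq; exact: adj_addn_le.
Qed.

Lemma dmax_adj_least i u :
  inAdjSi g i u -> adjPred g i u None ->
  exists s, inSi g i s /\ dmax g s = #|Pset g u|.
Proof.
move=> [s0 [[s0S s0i] adj_s0]] u_least; have [x [wx _ _]] := adj_factD s0S.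
rewrite adj_s0 in wx.
have lx : len x <= u by rewrite -[leqRHS]wx (leq_len_weight blowD_gt0).
have sS := inMon_factD wx (leq_trans lx (leq_addr _ _)).
have si : (u + u * e) %% e = i by rewrite addnC modnMDl -adj_s0 adj_modn.
have om := ordS_addn_eq wx lx
  (u_least _ (ex_intro _ _ (conj (conj sS si) erefl))).
exists (u + u * e); split=> //; rewrite dmax_addn //; apply: eq_card => z.
rewrite inE andb_idr // => zP.
by rewrite flenE -[leqRHS](weight_facts zP) (leq_len_weight blowD_gt0).
Qed.

Lemma dmax_adj_succ i u v :
  inAdjSi g i u -> adjPred g i u (Some v) ->
  exists s, inSi g i s /\ dmax g s = #|Rset g u (Some v)|.
Proof.
move=> [s0 [[s0S s0i] adj_s0]] [[sv [[svS svi] adj_sv]] lt_vu u_succ].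
have [x [wx _ lx]] := adj_factD s0S; rewrite adj_s0 in wx.
have [y [wy _ _]] := adj_factD svS; rewrite adj_sv in wy.
set mu := minordB g v; set q := (u - v) %/ e.
have u_eq : u = v + q * e.
  have : e %| u - v.
    by rewrite -eqn_mod_dvd ?(ltnW lt_vu) // -adj_s0 -adj_sv !adj_modn // s0i svi.
  by move/divnK; rewrite -/q => ->; rewrite subnKC // ltnW.
have q_gt0 : 0 < q.
  by rewrite lt0n; apply/eqP => q0; move: lt_vu; rewrite u_eq q0; lia.
have gap := ordS_lt_minordB s0S (etrans adj_s0 u_eq) q_gt0 wy.
rewrite -/mu in gap.
pose m := mu - q.+1; have lxm : len x <= m by lia.
have sS := inMon_factD wx (leq_trans lxm (leq_addr _ _)).
have si : (u + m * e) %% e = i by rewrite addnC modnMDl -adj_s0 adj_modn.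
have s_eq : u + m * e = v + mu.-1 * e.
  by rewrite u_eq -addnA -mulnDl; congr (_ + _ * _); lia.
have v_lt := adj_addn_pred_minordB svS adj_sv (leq_ltn_trans (leq0n _) gap).
rewrite -/mu -s_eq in v_lt; have {}v_lt := v_lt sS.
have om := ordS_addn_eq wx lxm
  (u_succ _ (ex_intro _ _ (conj (conj sS si) erefl)) v_lt).
exists (u + m * e); split=> //; rewrite dmax_addn //; apply: eq_card => z.
by rewrite !inE /mu -/q; have -> : mu - q = m.+1 by lia.
Qed.

End Blowup.

Theorem theorem3p9 (t : nat) (g : 'I_t.+1 -> nat) (i : nat) :
  min_gens_numsgp g -> i < g ord0 ->
  forall (u : nat) (pv : option nat),
    inAdjSi g i u -> adjPred g i u pv ->
    exists s, inSi g i s /\ dmax g s = #|Rset g u pv|.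
Proof.
case=> e_gt0 gen_incr _ _ _ u pv.
have e_lt_gen j : j != ord0 -> g ord0 < g j.
  by move=> nj; apply: gen_incr; rewrite lt0n.
case: pv => [v|]; [exact: dmax_adj_succ | exact: dmax_adj_least].
Qed.
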